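(* Suppose $m=n$, $\Xi=\{\boldsymbol{\xi}\in\mathbb{R}^m:(\boldsymbol{\xi}-\boldsymbol{\xi}_0)^{\top}\boldsymbol{W}^{-1}(\boldsymbol{\xi}-\boldsymbol{\xi}_0)\le1\}$ with $\boldsymbol{W}\succ0$, and $f_t(\boldsymbol{x},\boldsymbol{\xi})=\boldsymbol{\xi}^{\top}\boldsymbol{x}+\langle\boldsymbol{A}^t,\boldsymbol{\xi}\boldsymbol{\xi}^{\top}\rangle+(\boldsymbol{b}^t)^{\top}\boldsymbol{x}+h^t$ for all $t\in[T]$, where $\boldsymbol{A}^t\succeq0$, $\boldsymbol{b}^t\in\mathbb{R}^n$, $h^t\in\mathbb{R}$. Let $\tilde Z_{C_2}$ be the set of $\boldsymbol{x}\in\mathbb{R}^n$ for which there exist $\alpha_t>0$, $q_{it}\ge0$, $\boldsymbol{v}_{it}\in\mathbb{R}^m$ ($i\in[N],t\in[T]$) with, for all $i,t$, $\|\boldsymbol{v}_{it}\|_*\delta+\frac1N\sum_{j=1}^Nq_{jt}\le\epsilon\alpha_t$ and $\sup_{\boldsymbol{\xi}\in\Xi}[\boldsymbol{v}_{it}^{\top}\boldsymbol{\xi}-f_t(\boldsymbol{x},\boldsymbol{\xi})]+\alpha_t-\boldsymbol{v}_{it}^{\top}\boldsymbol{\zeta}^i-q_{it}\le0$. Then $\tilde Z_{C_2}$ equals the set of $\boldsymbol{x}\in\mathbb{R}^n$ for which there exist $\alpha_t>0$, $q_{it}\ge0$, $\boldsymbol{v}_{it}\in\mathbb{R}^m$,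 $u_{it}\in\mathbb{R}$, $\nu_{it}\ge0$ such that for all $i\in[N],t\in[T]$: $$\|\boldsymbol{v}_{it}\|_*\delta+\frac1N\sum_{j=1}^Nq_{jt}\le\epsilon\alpha_t,\qquad u_{it}-[(\boldsymbol{b}^t)^{\top}\boldsymbol{x}+h^t]+\alpha_t-\boldsymbol{v}_{it}^{\top}\boldsymbol{\zeta}^i\le q_{it},$$ $$\begin{bmatrix}\boldsymbol{A}^t+\nu_{it}\boldsymbol{W}^{-1}&-\frac12(2\nu_{it}\boldsymbol{W}^{-1}\boldsymbol{\xi}_0+\boldsymbol{v}_{it}-\boldsymbol{x})\\-\frac12(2\nu_{it}\boldsymbol{W}^{-1}\boldsymbol{\xi}_0+\boldsymbol{v}_{it}-\boldsymbol{x})^{\top}&u_{it}+\nu_{it}\boldsymbol{\xi}_0^{\top}\boldsymbol{W}^{-1}\boldsymbol{\xi}_0-\nu_{it}\end{bmatrix}\succeq0.$$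
   Context: Setting: $\epsilon\in(0,1)$, $\delta>0$, $[T]=\{1,\dots,T\}$; $\boldsymbol{\zeta}^1,\dots,\boldsymbol{\zeta}^N\in\Xi$ given samples; $\|\cdot\|_*$ is the dual norm of a norm on $\mathbb{R}^m$; $\langle\boldsymbol{X},\boldsymbol{Y}\rangle=\mathrm{tr}(\boldsymbol{X}\boldsymbol{Y})$; $\succeq0$ ($\succ0$) denotes positive semidefinite (definite). *)

From HB Require Import structures.
From mathcomp Require Import all_boot all_order all_algebra.
From mathcomp Require Import all_classical all_reals ereal.
Set Implicit Arguments. Unset Strict Implicit. Unset Printing Implicit Defensive.
Import Order.TTheory GRing.Theory Num.Theory.
Local Open Scope ring_scope.
Local Open Scope classical_set_scope.

Definition dotv {R : realType} {n : nat} (u v : 'cV[R]_n) : R := (u^T *m v) 0 0.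

Definition is_norm {R : realType} {n : nat} (nrm : 'cV[R]_n -> R) : Prop :=
  [/\ (forall x, 0 <= nrm x), (forall x, nrm x = 0 -> x = 0),
      (forall (a : R) x, nrm (a *: x) = `|a| * nrm x) &
      (forall x y, nrm (x + y) <= nrm x + nrm y)].

Definition dual_norm {R : realType} {n : nat} (nrm : 'cV[R]_n -> R) (v : 'cV[R]_n) : R :=
  sup [set dotv v y | y in [set y | nrm y <= 1]].

Definition psd {R : realType} {n : nat} (M : 'M[R]_n) : Prop :=
  M^T = M /\ forall z : 'cV[R]_n, 0 <= dotv z (M *m z).
Definition pd {R : realType} {n : nat} (M : 'M[R]_n) : Prop :=
  M^T = M /\ forall z : 'cV[R]_n, z != 0 -> 0 < dotv z (M *m z).

Definition ellipsoid {R : realType} {n : nat} (W : 'M[R]_n) (xi0 : 'cV[R]_n) : set 'cV[R]_n :=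
  [set xi | dotv (xi - xi0) (invmx W *m (xi - xi0)) <= 1].

(* f_t(x, xi) = xi^T x + <A, xi xi^T> + b^T x + h,  <X,Y> = tr(XY) *)
Definition fquad {R : realType} {n : nat} (A : 'M[R]_n) (b : 'cV[R]_n) (h : R)
  (x xi : 'cV[R]_n) : R :=
  dotv xi x + \tr (A *m (xi *m xi^T)) + dotv b x + h.

Definition ZC2 {R : realType} {n N T : nat} (nrm : 'cV[R]_n -> R) (eps delta : R)
  (zeta : 'I_N -> 'cV[R]_n) (W : 'M[R]_n) (xi0 : 'cV[R]_n)
  (A : 'I_T -> 'M[R]_n) (b : 'I_T -> 'cV[R]_n) (h : 'I_T -> R) : set 'cV[R]_n :=
  [set x | exists (alpha : 'I_T -> R) (q : 'I_N -> 'I_T -> R) (v : 'I_N -> 'I_T -> 'cV[R]_n),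
     (forall t, 0 < alpha t) /\ (forall i t, 0 <= q i t) /\
     forall i t,
       dual_norm nrm (v i t) * delta + N%:R^-1 * (\sum_(j < N) q j t) <= eps * alpha t /\
       (ereal_sup [set (dotv (v i t) xi - fquad (A t) (b t) (h t) x xi)%:E
                  | xi in ellipsoid W xi0]
        + (alpha t - dotv (v i t) (zeta i) - q i t)%:E <= 0)%E].

Definition lmi_mx {R : realType} {n : nat} (A Wi : 'M[R]_n) (xi0 v x : 'cV[R]_n)
  (u nu : R) : 'M[R]_(n + 1) :=
  let c := (2 * nu) *: (Wi *m xi0) + v - x in
  block_mx (A + nu *: Wi) (- (1/2) *: c)
           (- (1/2) *: c^T) ((u + nu * dotv xi0 (Wi *m xi0) - nu)%:M).

Definition ZSDP {R : realType} {n N T : nat} (nrm : 'cV[R]_n -> R) (eps delta : R)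
  (zeta : 'I_N -> 'cV[R]_n) (W : 'M[R]_n) (xi0 : 'cV[R]_n)
  (A : 'I_T -> 'M[R]_n) (b : 'I_T -> 'cV[R]_n) (h : 'I_T -> R) : set 'cV[R]_n :=
  [set x | exists (alpha : 'I_T -> R) (q : 'I_N -> 'I_T -> R) (v : 'I_N -> 'I_T -> 'cV[R]_n)
              (u : 'I_N -> 'I_T -> R) (nu : 'I_N -> 'I_T -> R),
     (forall t, 0 < alpha t) /\ (forall i t, 0 <= q i t) /\ (forall i t, 0 <= nu i t) /\
     forall i t,
       [/\ dual_norm nrm (v i t) * delta + N%:R^-1 * (\sum_(j < N) q j t) <= eps * alpha t,
           u i t - (dotv (b t) x + h t) + alpha t - dotv (v i t) (zeta i) <= q i t &
           psd (lmi_mx (A t) (invmx W) xi0 (v i t) x (u i t) (nu i t))]].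

From HB Require Import structures.
From mathcomp Require Import all_boot all_order all_algebra.
From mathcomp Require Import all_classical all_reals ereal.
From mathcomp Require Import ring lra.
Set Implicit Arguments.
Unset Strict Implicit.
Unset Printing Implicit Defensive.
Import Order.TTheory GRing.Theory Num.Theory.
Local Open Scope ring_scope.
Local Open Scope classical_set_scope.

(** Only the semi-infinite constraint differs between the two sets. With
   [f_t] substituted it says that [xi |-> (v - x)^T xi - xi^T A xi] is bounded
   by a constant [u] on the ellipsoid.  Both this quadratic and the ellipsoid
   constraint are convex and [xi_0] is a strictly feasible (Slater) point, so a
   Lagrange multiplier [nu >= 0] exists: the quadratic
   [xi^T A xi - (v - x)^T xi + u + nu ((xi - xi_0)^T W^-1 (xi - xi_0) - 1)]
   is nonnegative everywhere.  Homogenizing [xi = z / s], this is exactly the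
   positive semidefiniteness of the block matrix.  The norm, [eps] and [delta]
   constraints are shared verbatim by both sets. *)

Section dotv.
Context {R : realType} {n : nat}.
Implicit Types (u v w : 'cV[R]_n) (M : 'M[R]_n).

Lemma dotvDl u v w : dotv (u + v) w = dotv u w + dotv v w.
Proof. by rewrite /dotv linearD /= mulmxDl mxE. Qed.

Lemma dotvDr u v w : dotv w (u + v) = dotv w u + dotv w v.
Proof. by rewrite /dotv mulmxDr mxE. Qed.

Lemma dotvZl a u w : dotv (a *: u) w = a * dotv u w.
Proof. by rewrite /dotv linearZ /= -scalemxAl mxE. Qed.

Lemma dotvZr a u w : dotv w (a *: u) = a * dotv w u.
Proof. by rewrite /dotv -scalemxAr mxE. Qed.

Lemma dotvNl u w : dotv (- u) w = - dotv u w.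
Proof. by rewrite -scaleN1r dotvZl mulN1r. Qed.

Lemma dotvNr u w : dotv w (- u) = - dotv w u.
Proof. by rewrite -scaleN1r dotvZr mulN1r. Qed.

Lemma dotvBl u v w : dotv (u - v) w = dotv u w - dotv v w.
Proof. by rewrite dotvDl dotvNl. Qed.

Lemma dotv0l w : dotv 0 w = 0.
Proof. by rewrite /dotv trmx0 mul0mx mxE. Qed.

Lemma dotv0r w : dotv w 0 = 0.
Proof. by rewrite /dotv mulmx0 mxE. Qed.

Lemma dotvC u w : dotv u w = dotv w u.
Proof. by rewrite /dotv -[u^T *m w]trmxK trmx_mul trmxK mxE. Qed.

Lemma dotv_mulmxl M u w : dotv (M *m u) w = dotv u (M^T *m w).
Proof. by rewrite /dotv trmx_mul mulmxA. Qed.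

Lemma mulmx_tr_dotv u w : u^T *m w = (dotv u w)%:M.
Proof. exact: mx11_scalar. Qed.

Lemma mxtrace_mul_outer M w : \tr (M *m (w *m w^T)) = dotv w (M *m w).
Proof. by rewrite mulmxA mxtrace_mulC /mxtrace big_ord1. Qed.

End dotv.

Definition convex_fun {R : realType} {V : lmodType R} (f : V -> R) : Prop :=
  forall x y (l : R), 0 <= l <= 1 ->
    f (l *: x + (1 - l) *: y) <= l * f x + (1 - l) * f y.

Section convex_multiplier.
Context {R : realType} {V : lmodType R} (p g : V -> R).
Hypotheses (p_convex : convex_fun p) (g_convex : convex_fun g).
Hypothesis p_ge0_on_g_le0 : forall x, g x <= 0 -> 0 <= p x.

(* Apply convexity at the point of the segment [y, x] where the chord of [g] vanishes. *)
Lemma convex_cross_ge0 x y : g y < 0 -> 0 < g x -> 0 <= g x * p y - g y * p x.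
Proof.
move=> gy_lt0 gx_gt0; have gxy_gt0 : 0 < g x - g y by lra.
pose l := g x / (g x - g y).
have l01 : 0 <= l <= 1.
  by rewrite /l divr_ge0 ?(ltW gx_gt0) ?(ltW gxy_gt0) //= ler_pdivrMr //; lra.
have gz_le0 : g (l *: y + (1 - l) *: x) <= 0.
  have -> : 0 = l * g y + (1 - l) * g x by rewrite /l; field; lra.
  exact: g_convex.
have := le_trans (p_ge0_on_g_le0 gz_le0) (p_convex y x l01).
have -> : l * p y + (1 - l) * p x = (g x * p y - g y * p x) / (g x - g y).
  by rewrite /l; field; lra.
by rewrite pmulr_lge0 // invr_gt0.
Qed.

Lemma convex_multiplier x0 : g x0 < 0 ->
  exists nu, 0 <= nu /\ forall x, 0 <= p x + nu * g x.
Proof.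
move=> gx0_lt0.
pose ratios := [set p y / - g y | y in [set y | g y < 0]].
have ratios0 : ratios !=set0 by exists (p x0 / - g x0), x0.
have ratios_ge0 : lbound ratios 0.
  move=> _ [y /= gy_lt0 <-].
  by rewrite divr_ge0 ?oppr_ge0 ?p_ge0_on_g_le0 ?(ltW gy_lt0).
have le_inf : forall y, g y < 0 -> inf ratios <= p y / - g y.
  by move=> y gy_lt0; apply: ge_inf; [exists 0 | exists y].
exists (inf ratios); split=> [|x]; first exact: lb_le_inf.
have [gx_lt0|gx_gt0|gx0] := ltgtP (g x) 0.
- by have := le_inf x gx_lt0; rewrite ler_pdivlMr ?oppr_gt0 //; lra.
- suff : - p x / g x <= inf ratios by rewrite ler_pdivrMr //; lra.
  apply: lb_le_inf => // _ [y /= gy_lt0 <-].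
  have := convex_cross_ge0 gy_lt0 gx_gt0.
  by rewrite ler_pdivrMr // mulrAC ler_pdivlMr ?oppr_gt0 //; nra.
- by rewrite gx0 mulr0 addr0 p_ge0_on_g_le0 // gx0.
Qed.

End convex_multiplier.

Section quadratic_forms.
Context {R : realType} {n : nat}.
Implicit Types (M : 'M[R]_n) (a e z xi : 'cV[R]_n).

Lemma convex_quadratic M a e (k : R) : (forall z, 0 <= dotv z (M *m z)) ->
  convex_fun (fun xi => dotv (xi - a) (M *m (xi - a)) + dotv e xi + k).
Proof.
move=> M_ge0 x y l /andP[l_ge0]; rewrite -subr_ge0 => l_le1.
have -> : l *: x + (1 - l) *: y - a = l *: (x - a) + (1 - l) *: (y - a).
  by apply/matrixP=> i j; rewrite !mxE; ring.
rewrite dotvDr !dotvZr; move: (x - a) (y - a) => X Y.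
have := mulr_ge0 (mulr_ge0 l_ge0 l_le1) (M_ge0 (X - Y)).
rewrite mulmxBr mulmxDr -!scalemxAr !dotvDl !dotvDr !dotvNl !dotvNr !dotvZl !dotvZr.
nra.
Qed.

Lemma pd_ge0 M : pd M -> forall z, 0 <= dotv z (M *m z).
Proof.
move=> [_ M_gt0] z; have [->|z_neq0] := eqVneq z 0; first by rewrite dotv0l.
exact/ltW/M_gt0.
Qed.

Lemma psd_invmx M : pd M -> psd (invmx M).
Proof.
move=> M_pd; have [M_sym _] := M_pd; split=> [|z]; first by rewrite trmx_inv M_sym.
(* [invmx M = M] for singular [M]. *)
have [M_unit|M_sing] := boolP (M \in unitmx); last first.
  by rewrite (invmx_out M_sing); exact: pd_ge0.
by rewrite -{1}(mulKVmx M_unit z) dotv_mulmxl M_sym; exact: pd_ge0.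
Qed.

End quadratic_forms.

Lemma col_mx_usub_dsub {R : realType} {n : nat} (Z : 'cV[R]_(n + 1)) :
  Z = col_mx (usubmx Z) (dsubmx Z 0 0)%:M.
Proof. by rewrite -mx11_scalar vsubmxK. Qed.

Section lmi.
Context {R : realType} {n : nat}.
Variables (A Wi : 'M[R]_n) (xi0 v x : 'cV[R]_n) (u nu : R).
Hypotheses (A_psd : psd A) (Wi_psd : psd Wi).

Definition lagrangian (xi : 'cV[R]_n) : R :=
  dotv xi (A *m xi) - dotv (v - x) xi + u
  + nu * (dotv (xi - xi0) (Wi *m (xi - xi0)) - 1).

Let c := (2 * nu) *: (Wi *m xi0) + v - x.
Let L := lmi_mx A Wi xi0 v x u nu.

Lemma lmi_mx_sym : L^T = L.
Proof.
rewrite /L /lmi_mx tr_block_mx linearD /= linearZ /= A_psd.1 Wi_psd.1.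
by rewrite !linearZ /= trmxK tr_scalar_mx.
Qed.

Lemma lmi_mx_form (z : 'cV[R]_n) (s : R) :
  dotv (col_mx z s%:M) (L *m col_mx z s%:M) =
  dotv z ((A + nu *: Wi) *m z) - s * dotv z c
  + (u + nu * dotv xi0 (Wi *m xi0) - nu) * s ^+ 2.
Proof.
rewrite /L /lmi_mx -/c {1}/dotv mul_block_col tr_col_mx mul_row_col tr_scalar_mx.
rewrite !mul_mx_scalar mul_scalar_mx !mulmxDr -!scalemxAr -scalemxAl.
by rewrite !mulmx_tr_dotv !mxE !eqxx !mulr1n (dotvC c z); field.
Qed.

Lemma lmi_mx_form_scaled (xi : 'cV[R]_n) (s : R) :
  dotv (col_mx (s *: xi) s%:M) (L *m col_mx (s *: xi) s%:M) = s ^+ 2 * lagrangian xi.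
Proof.
rewrite lmi_mx_form /lagrangian /c mulmxDl -!scalemxAr -scalemxAl mulmxBr.
rewrite !(dotvDl, dotvDr, dotvNl, dotvNr, dotvZl, dotvZr).
rewrite (dotvC xi0 (Wi *m xi)) dotv_mulmxl Wi_psd.1 (dotvC v xi) (dotvC x xi).
ring.
Qed.

Lemma psd_lmi_mxP : 0 <= nu -> psd L <-> forall xi, 0 <= lagrangian xi.
Proof.
move=> nu_ge0; split=> [[_ L_ge0] xi | lagrangian_ge0].
  by have := L_ge0 (col_mx (1 *: xi) 1%:M); rewrite lmi_mx_form_scaled expr1n mul1r.
split=> [|Z]; first exact: lmi_mx_sym.
rewrite [Z]col_mx_usub_dsub; set s := dsubmx Z 0 0; set z := usubmx Z.
(* For [s != 0] the vector [col_mx z s%:M] is [s] times [col_mx (z / s) 1]. *)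
have [->|s_neq0] := eqVneq s 0.
  rewrite lmi_mx_form mul0r subr0 expr0n mulr0 addr0 mulmxDl -scalemxAl dotvDr dotvZr.
  by rewrite addr_ge0 ?mulr_ge0 ?A_psd.2 ?Wi_psd.2.
by rewrite -[z](scalerKV s_neq0) lmi_mx_form_scaled mulr_ge0 ?sqr_ge0.
Qed.

End lmi.

Lemma ellipsoid_quadratic_boundP {R : realType} {n : nat} (A Wi : 'M[R]_n) :
  psd A -> psd Wi -> forall (xi0 v x : 'cV[R]_n) (u : R),
  (forall xi, dotv (xi - xi0) (Wi *m (xi - xi0)) <= 1 ->
     dotv (v - x) xi - dotv xi (A *m xi) <= u) <->
  exists nu, 0 <= nu /\ psd (lmi_mx A Wi xi0 v x u nu).
Proof.
move=> A_psd Wi_psd xi0 v x u; split=> [bound | [nu [nu_ge0]]]; last first.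
  move/psd_lmi_mxP => /(_ A_psd Wi_psd nu_ge0) lagrangian_ge0 xi xi_in.
  have := lagrangian_ge0 xi; rewrite /lagrangian.
  have : 0 <= nu * (1 - dotv (xi - xi0) (Wi *m (xi - xi0))) by rewrite mulr_ge0 ?subr_ge0.
  lra.
pose p xi := dotv (xi - 0) (A *m (xi - 0)) + dotv (x - v) xi + u.
pose g xi := dotv (xi - xi0) (Wi *m (xi - xi0)) + dotv 0 xi - 1.
have p_eq xi : p xi = dotv xi (A *m xi) - dotv (v - x) xi + u.
  by rewrite /p subr0 -opprB dotvNl.
have g_eq xi : g xi = dotv (xi - xi0) (Wi *m (xi - xi0)) - 1.
  by rewrite /g dotv0l addr0.
have [nu [nu_ge0 pg_ge0]] : exists nu, 0 <= nu /\ forall xi, 0 <= p xi + nu * g xi.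
  apply: (@convex_multiplier _ _ p g _ _ _ xi0).
  - exact: convex_quadratic A_psd.2.
  - exact: convex_quadratic Wi_psd.2.
  - by move=> xi; rewrite p_eq g_eq subr_le0 => /bound; lra.
  - by rewrite g_eq subrr mulmx0 dotv0r sub0r ltrN10.
exists nu; split=> //; apply/psd_lmi_mxP => // xi.
by rewrite /lagrangian -p_eq -g_eq.
Qed.

Lemma ereal_sup_EFin_addr_le0P {T : Type} {R : realType} (S : set T) (F : T -> R) (k : R) :
  (ereal_sup [set (F xi)%:E | xi in S] + k%:E <= 0)%E <-> (forall xi, S xi -> F xi + k <= 0).
Proof.
split=> [sup_le xi Sxi | F_le].
- rewrite -lee_fin EFinD; apply: le_trans sup_le; apply: leeD2r.
  by apply: ereal_sup_ubound; exists xi.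
- have sup_le : (ereal_sup [set (F xi)%:E | xi in S] <= (- k)%:E)%E.
    by apply: ge_ereal_sup => _ [xi Sxi <-]; rewrite lee_fin -subr_le0 opprK F_le.
  by apply: le_trans (leeD2r _ sup_le) _; rewrite -EFinD addNr.
Qed.

Lemma robust_quadratic_constraintP {R : realType} {n : nat} (W A : 'M[R]_n)
    (xi0 v x b : 'cV[R]_n) (h k : R) :
  (ereal_sup [set (dotv v xi - fquad A b h x xi)%:E | xi in ellipsoid W xi0]
     + k%:E <= 0)%E <->
  forall xi, dotv (xi - xi0) (invmx W *m (xi - xi0)) <= 1 ->
    dotv (v - x) xi - dotv xi (A *m xi) <= dotv b x + h - k.
Proof.
rewrite ereal_sup_EFin_addr_le0P; split=> bound xi /bound;
  by rewrite /fquad mxtrace_mul_outer dotvBl (dotvC x xi); lra.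
Qed.

Theorem proposition3 (R : realType) (n N T : nat) (nrm : 'cV[R]_n -> R)
  (eps delta : R) (zeta : 'I_N -> 'cV[R]_n) (W : 'M[R]_n) (xi0 : 'cV[R]_n)
  (A : 'I_T -> 'M[R]_n) (b : 'I_T -> 'cV[R]_n) (h : 'I_T -> R) :
  is_norm nrm -> 0 < eps < 1 -> 0 < delta -> pd W -> (forall t, psd (A t)) ->
  ZC2 nrm eps delta zeta W xi0 A b h = ZSDP nrm eps delta zeta W xi0 A b h.
Proof.
move=> _ _ _ /psd_invmx Wi_psd A_psd.
apply/seteqP; split=> x /= [alpha [q [v]]].
- move=> [alpha_gt0 [q_ge0 cons]].
  pose u i t := dotv (b t) x + h t - (alpha t - dotv (v i t) (zeta i) - q i t).
  have /choice [nu nuP] : forall it : 'I_N * 'I_T, exists nu, 0 <= nu /\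
      psd (lmi_mx (A it.2) (invmx W) xi0 (v it.1 it.2) x (u it.1 it.2) nu).
    move=> [i t]; apply/ellipsoid_quadratic_boundP => //.
    by apply/robust_quadratic_constraintP; have [] := cons i t.
  exists alpha, q, v, u, (fun i t => nu (i, t)).
  do 2!split=> //; split=> i t; first exact: (nuP (i, t)).1.
  have [norm_le _] := cons i t; split=> //; last exact: (nuP (i, t)).2.
  by rewrite /u; lra.
- move=> [u [nu [alpha_gt0 [q_ge0 [nu_ge0 cons]]]]].
  exists alpha, q, v; split=> //; split=> // i t.
  have [norm_le u_le lmi_psd] := cons i t; split=> //.
  have /(ellipsoid_quadratic_boundP (A_psd t) Wi_psd) bound :
      exists nu', 0 <= nu' /\ psd (lmi_mx (A t) (invmx W) xi0 (v i t) x (u i t) nu').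
    by exists (nu i t).
  apply/robust_quadratic_constraintP => xi /bound; lra.
Qed.
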